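(* Let $R$ be a $\Bbbk$-algebra, $\sigma\in\operatorname{Aut}_\Bbbk(R)$, $H,J$ two-sided ideals of $R$, and $B=R(t,\sigma,H,J)$. Then: (1) $B$ is a $\mathbb Z$-graded subalgebra of $R[t,t^{-1};\sigma]$, with $B_n=I^{(n)}t^n$ in degree $n$; (2) $B$ is generated as a $\Bbbk$-algebra by $R$, $Jt=\{jt: j\in J\}$ and $\sigma^{-1}(H)t^{-1}=\{\sigma^{-1}(h)t^{-1}:h\in H\}$; (3) $B$ is a domain if and only if $R$ is a domain; (4) suppose $R$ is a domain, $\sigma$ has infinite order, and for no integer $k\neq 0$ does there exist a nonzero $a\in R$ with $ra=a\sigma^k(r)$ for all $r\in R$. Then the center of $B$ equals $Z(R)^{\langle\sigma\rangle}=\{z\in Z(R):\sigma(z)=z\}$, where $Z(R)$ is the center of $R$.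
   Context: $\Bbbk$ is a field; all algebras are associative unital $\Bbbk$-algebras. For an algebra $R$ and $\sigma\in\operatorname{Aut}_\Bbbk(R)$, $R[t,t^{-1};\sigma]$ is the skew Laurent ring: generated over $R$ by $t,t^{-1}$ with $tt^{-1}=t^{-1}t=1$ and $t^{\pm1}r=\sigma^{\pm1}(r)t^{\pm1}$ for $r\in R$. Given two-sided ideals $H,J$ of $R$, set $I^{(0)}=R$, $I^{(n)}=J\sigma(J)\cdots\sigma^{n-1}(J)$ for $n\ge1$, and $I^{(n)}=\sigma^{-1}(H)\sigma^{-2}(H)\cdots\sigma^{n}(H)$ for $n\le-1$; it is assumed throughout that $I^{(n)}\neq0$ for all $n\in\mathbb Z$. The Bell–Rogalski (BR) algebra is $R(t,\sigma,H,J)=\bigoplus_{n\in\mathbb Z}I^{(n)}t^n\subseteq R[t,t^{-1};\sigma]$. *)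

From HB Require Import structures.
From mathcomp Require Import all_boot all_order all_algebra.
Set Implicit Arguments. Unset Strict Implicit. Unset Printing Implicit Defensive.
Import Order.TTheory GRing.Theory Num.Theory.
Local Open Scope ring_scope.

Definition two_sided_ideal (R : nzRingType) (I : R -> Prop) : Prop :=
  I 0 /\ (forall x y, I x -> I y -> I (x + y)) /\
  (forall r x, I x -> I (r * x) /\ I (x * r)).

Definition img (A B : Type) (f : A -> B) (X : A -> Prop) : B -> Prop :=
  fun y => exists x, X x /\ y = f x.

Definition ideal_prod (R : nzRingType) (F : nat -> R -> Prop) (m : nat) : R -> Prop :=
  fun x => exists (l : nat) (w : 'I_l -> nat -> R),
    (forall j i, (i < m)%N -> F i (w j i)) /\
    x = \sum_(j < l) \prod_(i < m) w j i.

Definition sigz (R : Type) (s sinv : R -> R) (n : int) : R -> R :=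
  match n with
  | Posz m => iter m s
  | Negz m => iter m.+1 sinv
  end.

(* I^(n):  R for n = 0;  J s(J) ... s^(n-1)(J) for n >= 1;
   s^-1(H) s^-2(H) ... s^n(H) for n <= -1. *)
Definition Iseq (R : nzRingType) (s sinv : R -> R) (H J : R -> Prop) (n : int)
  : R -> Prop :=
  match n with
  | Posz 0 => fun _ => True
  | Posz m.+1 => ideal_prod (fun i => img (sigz s sinv (Posz i)) J) m.+1
  | Negz m => ideal_prod (fun i => img (sigz s sinv (Negz i)) H) m.+1
  end.

Definition tpow (S : nzRingType) (t tinv : S) (n : int) : S :=
  match n with
  | Posz m => t ^+ m
  | Negz m => tinv ^+ m.+1
  end.

Definition laurent_sum (R S : nzRingType) (iota : R -> S) (t tinv : S)
  (m : nat) (c : int -> R) : S :=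
  \sum_(i < (m.*2).+1) iota (c (i%:Z - m%:Z)) * tpow t tinv (i%:Z - m%:Z).

(* (S, iota, t) is the skew Laurent ring R[t, t^-1; sigma]: iota : R -> S is an
   injective k-algebra morphism, t is a unit with inverse tinv,
   t iota(r) = iota(sigma r) t, and every element of S is uniquely a finite
   sum  \sum_n iota(r_n) t^n  (i.e. S is free as a left R-module on the t^n). *)
Definition is_skew_laurent (k : fieldType) (R S : algType k) (sigma : R -> R)
  (iota : {lrmorphism R -> S}) (t tinv : S) : Prop :=
  injective iota /\ t * tinv = 1 /\ tinv * t = 1 /\
  (forall r, t * iota r = iota (sigma r) * t) /\
  (forall s, exists m c, s = laurent_sum iota t tinv m c) /\
  (forall m c, laurent_sum iota t tinv m c = 0 ->
     forall n : int, (`|n| <= m)%N -> c n = 0).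

Definition BR (R S : nzRingType) (s sinv : R -> R) (H J : R -> Prop)
  (iota : R -> S) (t tinv : S) : S -> Prop :=
  fun x => exists m c, x = laurent_sum iota t tinv m c /\
    forall n : int, (`|n| <= m)%N -> Iseq s sinv H J n (c n).

Definition BRdeg (R S : nzRingType) (s sinv : R -> R) (H J : R -> Prop)
  (iota : R -> S) (t tinv : S) (n : int) : S -> Prop :=
  fun x => exists r, Iseq s sinv H J n r /\ x = iota r * tpow t tinv n.

Definition is_subalg (k : fieldType) (S : algType k) (P : S -> Prop) : Prop :=
  P 1 /\ (forall x y, P x -> P y -> P (x + y)) /\
  (forall x y, P x -> P y -> P (x * y)) /\
  (forall (a : k) x, P x -> P (a *: x)).

Definition gen_subalg (k : fieldType) (S : algType k) (G : S -> Prop) : S -> Prop :=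
  fun x => forall P, is_subalg P -> (forall g, G g -> P g) -> P x.

Definition is_domain (R : nzRingType) : Prop :=
  (1 : R) != 0 /\ forall a b : R, a * b = 0 -> a = 0 \/ b = 0.

Definition is_domain_on (S : nzRingType) (P : S -> Prop) : Prop :=
  (1 : S) != 0 /\ forall a b, P a -> P b -> a * b = 0 -> a = 0 \/ b = 0.

From HB Require Import structures.
From mathcomp Require Import all_boot all_order all_algebra.
From mathcomp Require Import zify.
From Stdlib Require Import IndefiniteDescription.
Set Implicit Arguments. Unset Strict Implicit.
Import Order.TTheory GRing.Theory Num.Theory.
Local Open Scope ring_scope.

(* Everything follows from the product rule
   [(r t^m) (s t^n) = r sigma^m(s) t^(m+n)] and the inclusion
   [I^(m) sigma^m(I^(n)) <= I^(m+n)]: for m, n of the same sign the factors of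
   the two ideal products concatenate, and for opposite signs the shorter
   product is absorbed by truncating the longer one. Products of q generators
   of degree 1 (resp. -1) span I^(q) t^q (resp. I^(-q) t^(-q)). Comparing top
   coefficients shows that S, hence B, is a domain when R is. Finally, if x is
   central in B, commuting with iota(R) makes each coefficient [a = x_k]
   satisfy [r a = a sigma^k(r)], so x = iota(z) with z central in R; commuting
   with [j t] for some nonzero j in J then gives [j (z - sigma z) = 0]. *)

Lemma int_ind_succ_pred (P : int -> Prop) : P 0 -> (forall n, P n -> P (n + 1)) ->
  (forall n, P n -> P (n - 1)) -> forall n, P n.
Proof.
move=> P0 Ps Pp [n|n].
  elim: n => [//|n IH]; have := Ps _ IH; congr P; lia.
elim: n => [|n IH]; first by have := Pp _ P0; congr P.
have := Pp _ IH; congr P; rewrite !NegzE; lia.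
Qed.

Section IdealProduct.
Variable R : nzRingType.
Implicit Types (F G : nat -> R -> Prop).

Lemma ideal_prod_ind F m (P : R -> Prop) : P 0 -> (forall a b, P a -> P b -> P (a + b)) ->
  (forall w : nat -> R, (forall i, (i < m)%N -> F i (w i)) -> P (\prod_(i < m) w i)) ->
  forall x, ideal_prod F m x -> P x.
Proof.
move=> P0 PD Pw x [l [w [hw ->]]].
by apply: (big_ind P) => // j _; apply: Pw => i hi; apply: hw.
Qed.

Lemma ideal_prod0 F m : ideal_prod F m 0.
Proof. by exists 0%N, (fun _ _ => 0); split=> [[]//|]; rewrite big_ord0. Qed.

Lemma ideal_prodD F m a b : ideal_prod F m a -> ideal_prod F m b -> ideal_prod F m (a + b).
Proof.
move=> [l1 [w1 [h1 ->]]] [l2 [w2 [h2 ->]]].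
exists (l1 + l2)%N, (fun j => match split j with inl j1 => w1 j1 | inr j2 => w2 j2 end).
split=> [j i hi|]; first by case: (split j) => j'; [apply: h1|apply: h2].
rewrite big_split_ord /=; congr (_ + _); apply: eq_bigr => j _.
  by rewrite -[lshift _ _]/(unsplit (inl j)) unsplitK.
by rewrite -[rshift _ _]/(unsplit (inr j)) unsplitK.
Qed.

Lemma ideal_prod_mem F m (w : nat -> R) : (forall i, (i < m)%N -> F i (w i)) ->
  ideal_prod F m (\prod_(i < m) w i).
Proof.
move=> hw; exists 1%N, (fun _ => w); split=> [j i hi|]; first exact: hw.
by rewrite big_ord1.
Qed.

Lemma ideal_prod1 F x : F 0%N x -> ideal_prod F 1 x.
Proof.
move=> hx; have := @ideal_prod_mem F 1 (fun _ => x); rewrite big_ord1.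
by apply=> -[].
Qed.

Lemma ideal_prod_mono F G m x : (forall i y, (i < m)%N -> F i y -> G i y) ->
  ideal_prod F m x -> ideal_prod G m x.
Proof.
move=> hFG; apply: ideal_prod_ind; [exact: ideal_prod0|exact: ideal_prodD|].
by move=> w hw; apply: ideal_prod_mem => i hi; apply: hFG => //; apply: hw.
Qed.

Lemma ideal_prod_cat F G m n a b : ideal_prod F m a -> ideal_prod G n b ->
  ideal_prod (fun i => if (i < m)%N then F i else G (i - m)%N) (m + n) (a * b).
Proof.
move=> ha hb; move: a ha b hb.
apply: ideal_prod_ind => [b _|a1 a2 h1 h2 b hb|wa hwa].
- by rewrite mul0r; apply: ideal_prod0.
- by rewrite mulrDl; apply: ideal_prodD; [apply: h1|apply: h2].
apply: ideal_prod_ind => [|b1 b2 h1 h2|wb hwb].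
- by rewrite mulr0; apply: ideal_prod0.
- by rewrite mulrDr; apply: ideal_prodD.
pose w i := if (i < m)%N then wa i else wb (i - m)%N.
have -> : \prod_(i < m) wa i * \prod_(i < n) wb i = \prod_(i < m + n) w i.
  rewrite big_split_ord /=; congr (_ * _); apply: eq_bigr => i _; rewrite /w /=.
    by rewrite ltn_ord.
  by rewrite ltnNge leq_addr /= addKn.
apply: ideal_prod_mem => i hi; rewrite /w; case: ifP => him; first exact: hwa.
by apply: hwb; lia.
Qed.

Lemma ideal_prod_rmorph F m (f : {rmorphism R -> R}) x : ideal_prod F m x ->
  ideal_prod (fun i => img f (F i)) m (f x).
Proof.
move: x; apply: (ideal_prod_ind (P := fun x => ideal_prod _ m (f x))).
- by rewrite rmorph0; apply: ideal_prod0.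
- by move=> a b ha hb; rewrite rmorphD; apply: ideal_prodD.
move=> w hw; rewrite rmorph_prod.
apply: (@ideal_prod_mem _ _ (fun i => f (w i))) => i hi.
by exists (w i); split => //; apply: hw.
Qed.

Lemma ideal_prod_prefix F m K x r : (0 < K <= m)%N ->
  (forall y s, F K.-1 y -> F K.-1 (y * s)) ->
  ideal_prod F m x -> ideal_prod F K (x * r).
Proof.
case: K => // K /= hKm hF; move: x; apply: ideal_prod_ind.
- by rewrite mul0r; apply: ideal_prod0.
- by move=> a b ha hb; rewrite mulrDl; apply: ideal_prodD.
move=> w hw.
pose u i := if (i < K)%N then w i else (\prod_(K <= j < m) w j) * r.
have -> : \prod_(i < m) w i * r = \prod_(i < K.+1) u i.
  rewrite -!(big_mkord xpredT) (big_cat_nat (n:=K)) //; last by lia.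
  rewrite big_nat_recr //= -mulrA; congr (_ * _).
    by apply: eq_big_nat => i /andP [_ hi]; rewrite /u hi.
  by rewrite /u ltnn.
apply: ideal_prod_mem => i hi; rewrite /u; case: ifP => hiK; first by apply: hw; lia.
have -> : i = K by lia.
by rewrite big_ltn ?(ltnW hKm) // -mulrA; apply: hF; apply: hw.
Qed.

Lemma ideal_prod_suffix F m K x r : (0 < K <= m)%N ->
  (forall y s, F (m - K)%N y -> F (m - K)%N (s * y)) ->
  ideal_prod F m x -> ideal_prod (fun i => F (i + (m - K))%N) K (r * x).
Proof.
case: K => // K /= hKm hF; move: x; apply: ideal_prod_ind.
- by rewrite mulr0; apply: ideal_prod0.
- by move=> a b ha hb; rewrite mulrDr; apply: ideal_prodD.
move=> w hw; set d := (m - K.+1)%N.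
pose u i := if i == 0%N then r * (\prod_(0 <= j < d.+1) w j) else w (i + d)%N.
have -> : r * \prod_(i < m) w i = \prod_(i < K.+1) u i.
  rewrite -!(big_mkord xpredT) [in RHS]big_ltn //.
  rewrite [in LHS](big_cat_nat (n:=d.+1)) //; last by lia.
  rewrite mulrA; congr (_ * _).
  rewrite -(add1n d) big_addn.
  have -> : (m - d = K.+1)%N by lia.
  by apply: eq_big_nat => i /andP [hi _]; rewrite /u; case: i hi.
apply: ideal_prod_mem => i hi; rewrite /u; case: eqP => [->|_]; last by apply: hw; lia.
by rewrite big_nat_recr //= mulrA; apply: hF; apply: hw; lia.
Qed.

Lemma ideal_prod_ideal F m : (0 < m)%N -> (forall i, two_sided_ideal (F i)) ->
  two_sided_ideal (ideal_prod F m).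
Proof.
move=> m0 hF; split; first exact: ideal_prod0.
split=> [|s x hx]; first exact: ideal_prodD.
have hm : (0 < m <= m)%N by rewrite m0 leqnn.
split; last by apply: (ideal_prod_prefix (K := m)) hx => // y r hy; exact: ((hF _).2.2 r y hy).2.
have := ideal_prod_suffix s hm (fun y r hy => ((hF _).2.2 r y hy).1) hx.
rewrite subnn.
by apply: ideal_prod_mono => i y _; rewrite addn0.
Qed.

Lemma two_sided_ideal_img (f : {rmorphism R -> R}) g X :
  cancel f g -> cancel g f -> two_sided_ideal X -> two_sided_ideal (img f X).
Proof.
move=> fK gK [X0 [XD XM]]; split; first by exists 0; rewrite rmorph0.
split=> [_ _ [x [hx ->]] [y [hy ->]]|s _ [x [hx ->]]].
  by exists (x + y); rewrite rmorphD; split => //; apply: XD.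
have [hl hr] := XM (g s) x hx.
by split; [exists (g s * x)|exists (x * g s)]; rewrite rmorphM gK.
Qed.

End IdealProduct.

Section Subalgebra.
Variables (k : fieldType) (S : algType k) (P : S -> Prop).
Hypothesis hP : is_subalg P.

Lemma subalg0 : P 0.
Proof. by case: hP => P1 [_ [_ hZ]]; rewrite -(scale0r (1 : S)); apply: hZ. Qed.

Lemma subalg_sum (I : Type) (s : seq I) (f : I -> S) :
  (forall i, P (f i)) -> P (\sum_(i <- s) f i).
Proof.
move=> hf; have [_ [hD _]] := hP.
by apply: (big_ind P) => //; exact: subalg0.
Qed.

End Subalgebra.

Section Automorphism.
Variables (k : fieldType) (R : algType k).
Variables (sigma : {lrmorphism R -> R}) (sigmainv : R -> R).
Hypotheses (sigmaK : cancel sigma sigmainv) (sigmaVK : cancel sigmainv sigma).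
Local Notation sz := (sigz sigma sigmainv).

Lemma sigz_succ n x : sz (n + 1) x = sigma (sz n x).
Proof.
case: n => [n|[|n]]; last 2 first.
- by rewrite /= sigmaVK.
- have -> : Negz n.+1 + 1 = Negz n by rewrite !NegzE; lia.
  by rewrite /= sigmaVK.
by have -> : Posz n + 1 = Posz n.+1 by lia.
Qed.

Lemma sigz_pred n x : sz (n - 1) x = sigmainv (sz n x).
Proof.
case: n => [[|n]|n] //.
- have -> : Posz n.+1 - 1 = Posz n by lia.
  by rewrite /= sigmaK.
- by have -> : Negz n - 1 = Negz n.+1 by rewrite !NegzE; lia.
Qed.

Lemma sigzD m n x : sz (m + n) x = sz m (sz n x).
Proof.
elim/int_ind_succ_pred: m x => [|m IH|m IH] x; first by rewrite add0r.
- by rewrite -addrAC !sigz_succ IH.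
- by rewrite -addrAC !sigz_pred IH.
Qed.

Lemma sigzK n : cancel (sz n) (sz (- n)).
Proof. by move=> x; rewrite -sigzD addNr. Qed.

Lemma sigzVK n : cancel (sz (- n)) (sz n).
Proof. by move=> x; rewrite -sigzD addrN. Qed.

Lemma sigz_inj n : injective (sz n).
Proof. exact: can_inj (sigzK n). Qed.

Lemma sigz_fixed n z : sigma z = z -> sz n z = z.
Proof.
move=> hz; have hz' : sigmainv z = z by rewrite -{1}hz sigmaK.
by elim/int_ind_succ_pred: n => [//|n IH|n IH]; rewrite ?sigz_succ ?sigz_pred IH.
Qed.

HB.instance Definition _ :=
  GRing.isZmodMorphism.Build R R sigmainv (can2_zmod_morphism sigmaK sigmaVK).
HB.instance Definition _ :=
  GRing.isMonoidMorphism.Build R R sigmainv (can2_monoid_morphism sigmaK sigmaVK).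
HB.instance Definition _ :=
  GRing.isScalable.Build k R R *:%R sigmainv (can2_scalable sigmaK sigmaVK).

Lemma sigz_zmod_morphism n : zmod_morphism (sz n).
Proof.
by elim/int_ind_succ_pred: n => [//|n IH|n IH] x y;
  rewrite ?sigz_succ ?sigz_pred IH rmorphB.
Qed.

Lemma sigz_monoid_morphism n : monoid_morphism (sz n).
Proof.
elim/int_ind_succ_pred: n => [//|n [IH1 IHM]|n [IH1 IHM]].
  by split=> [|x y]; rewrite !sigz_succ ?IH1 ?IHM (rmorph1, rmorphM).
by split=> [|x y]; rewrite !sigz_pred ?IH1 ?IHM (rmorph1, rmorphM).
Qed.

Lemma sigz_scalable n : scalable (sz n).
Proof.
by elim/int_ind_succ_pred: n => [//|n IH|n IH] a x;
  rewrite ?sigz_succ ?sigz_pred IH linearZ.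
Qed.

HB.instance Definition _ n := GRing.isZmodMorphism.Build R R (sz n) (sigz_zmod_morphism n).
HB.instance Definition _ n := GRing.isMonoidMorphism.Build R R (sz n) (sigz_monoid_morphism n).
HB.instance Definition _ n := GRing.isScalable.Build k R R *:%R (sz n) (sigz_scalable n).

Lemma ideal_prod_sigz X (e : nat -> int) m j x :
  ideal_prod (fun i => img (sz (e i)) X) m x ->
  ideal_prod (fun i => img (sz (j + e i)) X) m (sz j x).
Proof.
move/(ideal_prod_rmorph (sz j)); apply: ideal_prod_mono => i _ _ [_ [[y [hy ->]] ->]].
by exists y; rewrite sigzD.
Qed.

Lemma two_sided_ideal_sigz e X : two_sided_ideal X -> two_sided_ideal (img (sz e) X).
Proof. exact: two_sided_ideal_img (sigzK e) (sigzVK e). Qed.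

Section IdealSequence.
Variables (H J : R -> Prop).
Hypotheses (hH : two_sided_ideal H) (hJ : two_sided_ideal J).
Local Notation Is := (Iseq sigma sigmainv H J).

Lemma Iseq_ideal n : two_sided_ideal (Is n).
Proof.
case: n => [[|p]|p]; first by [].
all: by apply: ideal_prod_ideal => // i; apply: two_sided_ideal_sigz.
Qed.

Lemma Iseq_mul_pos p q a b : Is (Posz p.+1) a -> Is (Posz q.+1) b ->
  Is (Posz p.+1 + Posz q.+1) (a * sz (Posz p.+1) b).
Proof.
move=> ha /(ideal_prod_sigz (e := Posz) (Posz p.+1)) /(ideal_prod_cat ha).
apply: ideal_prod_mono => i y _; case: ifP => // hip.
by have -> : Posz p.+1 + Posz (i - p.+1) = Posz i by lia.
Qed.

Lemma Iseq_mul_neg p q a b : Is (Negz p) a -> Is (Negz q) b ->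
  Is (Negz p + Negz q) (a * sz (Negz p) b).
Proof.
move=> ha /(ideal_prod_sigz (e := Negz) (Negz p)) /(ideal_prod_cat ha).
have -> : Negz p + Negz q = Negz (p + q.+1) by rewrite !NegzE; lia.
apply: ideal_prod_mono => i y _; case: ifP => // hip.
by have -> : Negz p + Negz (i - p.+1) = Negz i by rewrite !NegzE; lia.
Qed.

Lemma Iseq_mul_pos_neg p q a b : Is (Posz p.+1) a -> Is (Negz q) b ->
  Is (Posz p.+1 + Negz q) (a * sz (Posz p.+1) b).
Proof.
move=> ha /(ideal_prod_sigz (e := Negz) (Posz p.+1)) hb.
case: (ltngtP q p) => hqp.
- have -> : Posz p.+1 + Negz q = Posz (p - q.+1).+1 by rewrite NegzE; lia.
  apply: (ideal_prod_prefix (K := (p - q.+1).+1)) ha; first by lia.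
  by move=> y s hy; have [] := (two_sided_ideal_sigz (Posz (p - q.+1)) hJ).2.2 s y hy.
- have -> : Posz p.+1 + Negz q = Negz (q - p.+1) by rewrite !NegzE; lia.
  have hK : (0 < (q - p.+1).+1 <= q.+1)%N by lia.
  have := ideal_prod_suffix a hK (fun y s hy => ((two_sided_ideal_sigz _ hH).2.2 s y hy).1) hb.
  apply: ideal_prod_mono => i y _.
  by have -> : Posz p.+1 + Negz (i + (q.+1 - (q - p.+1).+1)) = Negz i by rewrite !NegzE; lia.
- by have -> : Posz p.+1 + Negz q = 0 by rewrite NegzE; lia.
Qed.

Lemma Iseq_mul_neg_pos p q a b : Is (Negz p) a -> Is (Posz q.+1) b ->
  Is (Negz p + Posz q.+1) (a * sz (Negz p) b).
Proof.
move=> ha /(ideal_prod_sigz (e := Posz) (Negz p)) hb.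
case: (ltngtP q p) => hqp.
- have -> : Negz p + Posz q.+1 = Negz (p - q.+1) by rewrite !NegzE; lia.
  apply: (ideal_prod_prefix (K := (p - q.+1).+1)) ha; first by lia.
  by move=> y s hy; have [] := (two_sided_ideal_sigz (Negz (p - q.+1)) hH).2.2 s y hy.
- have -> : Negz p + Posz q.+1 = Posz (q - p.+1).+1 by rewrite NegzE; lia.
  have hK : (0 < (q - p.+1).+1 <= q.+1)%N by lia.
  have := ideal_prod_suffix a hK (fun y s hy => ((two_sided_ideal_sigz _ hJ).2.2 s y hy).1) hb.
  apply: ideal_prod_mono => i y _.
  by have -> : Negz p + Posz (i + (q.+1 - (q - p.+1).+1)) = Posz i by rewrite NegzE; lia.
- by have -> : Negz p + Posz q.+1 = 0 by rewrite NegzE; lia.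
Qed.

Lemma Iseq_mul m n a b : Is m a -> Is n b -> Is (m + n) (a * sz m b).
Proof.
have [Is_mull Is_mulr] : (forall n a s, Is n a -> Is n (s * a)) /\
                         (forall n a s, Is n a -> Is n (a * s)).
  by split=> n' a' s /((Iseq_ideal n').2.2 s) [].
case: m => [[|p]|p] ha; first by rewrite add0r; apply: Is_mull.
all: case: n => [[|q]|q] hb; first by rewrite addr0; apply: Is_mulr.
- exact: Iseq_mul_pos.
- exact: Iseq_mul_pos_neg.
- exact: Iseq_mul_neg_pos.
- exact: Iseq_mul_neg.
Qed.

Lemma Iseq1_sub x : Is 1 x -> J x.
Proof.
have [J0 [JD _]] := hJ; apply: ideal_prod_ind => // w /(_ 0%N isT) [j [hj wj]].
by rewrite big_ord1 wj.
Qed.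

End IdealSequence.

Section SkewLaurent.
Variables (S : algType k) (io : {lrmorphism R -> S}) (t tinv : S).
Hypothesis hS : is_skew_laurent sigma io t tinv.
Local Notation T := (tpow t tinv).

Lemma iota_inj : injective io. Proof. by case: hS. Qed.
Lemma t_tinv : t * tinv = 1. Proof. by case: hS => _ []. Qed.
Lemma tinv_t : tinv * t = 1. Proof. by case: hS => _ [_ []]. Qed.
Lemma t_iota r : t * io r = io (sigma r) * t. Proof. by case: hS => _ [_ [_ []]]. Qed.

Lemma tinv_iota r : tinv * io r = io (sigmainv r) * tinv.
Proof.
have := t_iota (sigmainv r); rewrite sigmaVK => h.
rewrite -[io (sigmainv r)]mul1r -tinv_t -(mulrA tinv t) h !mulrA -(mulrA _ t tinv).
by rewrite t_tinv mulr1.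
Qed.

Lemma tpow_succ n : T (n + 1) = t * T n.
Proof.
case: n => [n|[|n]].
- have -> : Posz n + 1 = Posz n.+1 by lia.
  by rewrite /= exprS.
- by rewrite /= expr1 t_tinv.
- have -> : Negz n.+1 + 1 = Negz n by rewrite !NegzE; lia.
  by rewrite /= [tinv ^+ n.+2]exprS mulrA t_tinv mul1r.
Qed.

Lemma tpow_pred n : T (n - 1) = tinv * T n.
Proof.
case: n => [[|n]|n].
- by rewrite /= expr1 mulr1.
- have -> : Posz n.+1 - 1 = Posz n by lia.
  by rewrite /= exprS mulrA tinv_t mul1r.
- have -> : Negz n - 1 = Negz n.+1 by rewrite !NegzE; lia.
  by rewrite /= [tinv ^+ n.+2]exprS.
Qed.

Lemma tpowD m n : T (m + n) = T m * T n.
Proof.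
elim/int_ind_succ_pred: m => [|m IH|m IH]; first by rewrite add0r mul1r.
- by rewrite -addrAC !tpow_succ IH mulrA.
- by rewrite -addrAC !tpow_pred IH mulrA.
Qed.

Lemma tpow_iota n r : T n * io r = io (sz n r) * T n.
Proof.
elim/int_ind_succ_pred: n r => [|n IH|n IH] r; first by rewrite mul1r mulr1.
- by rewrite tpow_succ -mulrA IH !mulrA t_iota sigz_succ.
- by rewrite tpow_pred -mulrA IH !mulrA tinv_iota sigz_pred.
Qed.

Lemma monomialM a b m n :
  io a * T m * (io b * T n) = io (a * sz m b) * T (m + n).
Proof. by rewrite mulrA -(mulrA (io a)) tpow_iota mulrA -rmorphM -mulrA -tpowD. Qed.

Definition degs (m : nat) : seq int := [seq i%:Z - m%:Z | i <- iota 0 (m.*2).+1].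
Definition lsum (m : nat) (c : int -> R) : S := \sum_(n <- degs m) io (c n) * T n.
Definition trunc (m : nat) (c : int -> R) (n : int) : R := if (`|n| <= m)%N then c n else 0.

Lemma mem_degs m n : (n \in degs m) = (`|n| <= m)%N.
Proof.
apply/mapP/idP => [[i] |hn].
  by rewrite mem_iota => /andP [_ hi] ->; lia.
by exists (absz (n + m%:Z)); [rewrite mem_iota|]; lia.
Qed.

Lemma degs_uniq m : uniq (degs m).
Proof. by rewrite map_inj_uniq ?iota_uniq // => i j /addIr []. Qed.

Lemma laurent_sumE m c : laurent_sum io t tinv m c = lsum m c.
Proof. by rewrite /lsum /degs big_map -val_enum_ord big_map enumT. Qed.

Lemma lsumD m c d : lsum m c + lsum m d = lsum m (fun n => c n + d n).
Proof. by rewrite /lsum -big_split; apply: eq_bigr => n _; rewrite rmorphD mulrDl. Qed.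

Lemma lsumN m c : - lsum m c = lsum m (fun n => - c n).
Proof. by rewrite /lsum -sumrN; apply: eq_bigr => n _; rewrite rmorphN mulNr. Qed.

Lemma lsum0 m : lsum m (fun _ => 0) = 0.
Proof. by rewrite /lsum big1 // => n _; rewrite rmorph0 mul0r. Qed.

Lemma eq_lsum m c d : (forall n, (`|n| <= m)%N -> c n = d n) -> lsum m c = lsum m d.
Proof. by move=> h; apply: eq_big_seq => n; rewrite mem_degs => /h ->. Qed.

Lemma lsum_widen m m' c : (m <= m')%N -> lsum m c = lsum m' (trunc m c).
Proof.
move=> hm; rewrite /lsum.
have -> : \sum_(n <- degs m') io (trunc m c n) * T n =
          \sum_(n <- degs m' | n \in degs m) io (c n) * T n.
  rewrite [in RHS]big_mkcond; apply: eq_bigr => n _; rewrite /trunc mem_degs.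
  by case: ifP => //; rewrite rmorph0 mul0r.
rewrite -[in RHS]big_filter; apply: perm_big; apply: uniq_perm.
- exact: degs_uniq.
- by rewrite filter_uniq // degs_uniq.
move=> n; rewrite mem_filter !mem_degs; apply/idP/andP => [h|[]//]; split=> //; lia.
Qed.

Lemma lsum_eq0 m c : lsum m c = 0 -> forall n, (`|n| <= m)%N -> c n = 0.
Proof. by case: hS => _ [_ [_ [_ [_ hu]]]] h; apply: hu; rewrite laurent_sumE. Qed.

Lemma lsum_surj x : exists mc : nat * (int -> R), x = lsum mc.1 mc.2.
Proof.
case: hS => _ [_ [_ [_ [hex _]]]]; have [m [c ->]] := hex x.
by exists (m, c); rewrite laurent_sumE.
Qed.

(* The coefficients of [x], read off from one chosen expansion of [x]; by
   [lsum_eq0] they do not depend on that choice (lemma [lcoef_lsum]). *)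
Definition lrepr (x : S) : nat * (int -> R) :=
  proj1_sig (constructive_indefinite_description _ (lsum_surj x)).
Definition lbound (x : S) : nat := (lrepr x).1.
Definition lcoef (x : S) : int -> R := trunc (lbound x) (lrepr x).2.

Lemma lcoef_out x n : (lbound x < `|n|)%N -> lcoef x n = 0.
Proof. by move=> h; rewrite /lcoef /trunc; case: ifP => //; lia. Qed.

Lemma lcoef_in x n : lcoef x n != 0 -> (`|n| <= lbound x)%N.
Proof. by apply: contraR; rewrite -ltnNge => /lcoef_out ->. Qed.

Lemma lcoef_expand x : x = lsum (lbound x) (lcoef x).
Proof.
rewrite {1}(proj2_sig (constructive_indefinite_description _ (lsum_surj x))).
by apply: eq_lsum => n hn; rewrite /lcoef /trunc hn.
Qed.

Lemma lcoef_expand_widen x m : (lbound x <= m)%N -> x = lsum m (lcoef x).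
Proof.
move=> h; rewrite {1}(lcoef_expand x) (lsum_widen _ h); apply: eq_lsum => n _.
by rewrite /trunc; case: ifP => // h1; rewrite lcoef_out //; lia.
Qed.

Lemma lcoef_lsum m c n : lcoef (lsum m c) n = trunc m c n.
Proof.
set x := lsum m c; set M := maxn m (lbound x).
have e1 : x = lsum M (trunc m c) by apply: lsum_widen; apply: leq_maxl.
have e2 : x = lsum M (lcoef x) by apply: lcoef_expand_widen; apply: leq_maxr.
have h0 : lsum M (trunc m c) + - lsum M (lcoef x) = 0 by rewrite -e1 -e2 subrr.
rewrite lsumN lsumD in h0; have hu := lsum_eq0 h0.
case: (leqP `|n| M) => hn; first by apply/eqP; rewrite eq_sym -subr_eq0 (hu n hn).
rewrite lcoef_out /trunc; last by lia.
by case: ifP => //; lia.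
Qed.

Lemma lcoef_lsum_small x m (c : int -> R) n : x = lsum m c ->
  (forall n, (m < `|n|)%N -> c n = 0) -> lcoef x n = c n.
Proof. by move=> -> hc; rewrite lcoef_lsum /trunc; case: ifP => // h; rewrite hc //; lia. Qed.

Lemma lcoef_inj x y : (forall n, lcoef x n = lcoef y n) -> x = y.
Proof.
move=> h; rewrite (lcoef_expand_widen (leq_maxl (lbound x) (lbound y))).
by rewrite [RHS](lcoef_expand_widen (leq_maxr (lbound x) (lbound y))); apply: eq_lsum.
Qed.

Lemma lcoefD x y n : lcoef (x + y) n = lcoef x n + lcoef y n.
Proof.
apply: (lcoef_lsum_small (m := maxn (lbound x) (lbound y))
                         (c := fun n => lcoef x n + lcoef y n)).
  by rewrite -lsumD -!lcoef_expand_widen ?leq_maxl ?leq_maxr.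
by move=> j hj; rewrite !lcoef_out ?addr0 //; lia.
Qed.

Lemma lcoef0 n : lcoef 0 n = 0.
Proof. by apply: (lcoef_lsum_small (m := 0) (c := fun _ => 0)); rewrite ?lsum0. Qed.

Lemma lcoef_sum (I : Type) (s : seq I) (f : I -> S) n :
  lcoef (\sum_(i <- s) f i) n = \sum_(i <- s) lcoef (f i) n.
Proof.
elim: s => [|a s IH]; first by rewrite !big_nil lcoef0.
by rewrite !big_cons lcoefD IH.
Qed.

Lemma lcoef_monomial r d n : lcoef (io r * T d) n = if n == d then r else 0.
Proof.
apply: (lcoef_lsum_small (m := `|d|%N) (c := fun n => if n == d then r else 0)) => [|j hj]; last by case: eqP hj => // ->; lia.
rewrite /lsum (bigD1_seq d) ?degs_uniq ?mem_degs //= eqxx big1 ?addr0 // => i hi.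
by rewrite (negbTE hi) rmorph0 mul0r.
Qed.

Lemma lcoefZ (a : k) x n : lcoef (a *: x) n = a *: lcoef x n.
Proof.
apply: (lcoef_lsum_small (m := lbound x) (c := fun n => a *: lcoef x n)) => [|j hj]; last by rewrite lcoef_out ?scaler0.
rewrite {1}(lcoef_expand x) /lsum scaler_sumr; apply: eq_bigr => j _.
by rewrite scalerAl linearZ.
Qed.

Lemma lcoef_iotaM r x n : lcoef (io r * x) n = r * lcoef x n.
Proof.
apply: (lcoef_lsum_small (m := lbound x) (c := fun n => r * lcoef x n)) => [|j hj]; last by rewrite lcoef_out ?mulr0.
rewrite {1}(lcoef_expand x) /lsum mulr_sumr; apply: eq_bigr => j _.
by rewrite mulrA rmorphM.
Qed.

Lemma lcoef_Miota x r n : lcoef (x * io r) n = lcoef x n * sz n r.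
Proof.
apply: (lcoef_lsum_small (m := lbound x) (c := fun n => lcoef x n * sz n r)) => [|j hj]; last by rewrite lcoef_out ?mul0r.
rewrite {1}(lcoef_expand x) /lsum mulr_suml; apply: eq_bigr => j _.
by rewrite -mulrA tpow_iota mulrA rmorphM.
Qed.

Lemma lcoef_top x : x != 0 ->
  exists d, lcoef x d != 0 /\ forall n, d < n -> lcoef x n = 0.
Proof.
move=> x0; set b := lbound x.
have /hasP [n0 _ nz0] : has (fun n => lcoef x n != 0) (degs b).
  apply: contraR x0 => /hasPn h0; apply/eqP; rewrite (lcoef_expand x) /lsum big_seq.
  by rewrite big1 // => n /h0 /negPn /eqP ->; rewrite rmorph0 mul0r.
have ex : exists i : nat, lcoef x (i%:Z - b%:Z) != 0.
  exists (absz (n0 + b%:Z)); have := lcoef_in nz0.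
  by rewrite -/b => hb; rewrite (_ : _ - _ = n0) //; lia.
have bounded i : lcoef x (i%:Z - b%:Z) != 0 -> (i <= b.*2)%N by move/lcoef_in; lia.
have [i nzi imax] := ex_maxnP ex bounded.
exists (i%:Z - b%:Z); split => // n ltn; apply/eqP; apply: contraTT ltn => nzn.
have := lcoef_in nzn; rewrite -/b => hn; rewrite -leNgt.
have := imax (absz (n + b%:Z)); rewrite (_ : _ - _ = n); last by lia.
by move=> /(_ nzn); lia.
Qed.

Lemma lcoefM x y d M : (lbound x <= M)%N -> (lbound y <= M)%N ->
  lcoef (x * y) d = \sum_(n <- degs M) \sum_(j <- degs M)
    (if n + j == d then lcoef x n * sz n (lcoef y j) else 0).
Proof.
move=> hx hy.
transitivity (lcoef (lsum M (lcoef x) * lsum M (lcoef y)) d).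
  by rewrite -!lcoef_expand_widen.
rewrite /lsum mulr_suml lcoef_sum; apply: eq_bigr => n _.
rewrite mulr_sumr lcoef_sum; apply: eq_bigr => j _.
by rewrite monomialM lcoef_monomial eq_sym.
Qed.

Lemma lcoefM_top x y dx dy : lcoef x dx != 0 -> lcoef y dy != 0 ->
  (forall n, dx < n -> lcoef x n = 0) -> (forall n, dy < n -> lcoef y n = 0) ->
  lcoef (x * y) (dx + dy) = lcoef x dx * sz dx (lcoef y dy).
Proof.
move=> nzx nzy topx topy; set M := maxn (lbound x) (lbound y).
have hx : (lbound x <= M)%N by apply: leq_maxl.
have hy : (lbound y <= M)%N by apply: leq_maxr.
have dxM : dx \in degs M by rewrite mem_degs; apply: leq_trans (lcoef_in nzx) hx.
have dyM : dy \in degs M by rewrite mem_degs; apply: leq_trans (lcoef_in nzy) hy.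
rewrite (lcoefM _ hx hy) (bigD1_seq dx) ?degs_uniq //= (bigD1_seq dy) ?degs_uniq //=.
rewrite eqxx big1 => [|j njy]; last by rewrite (inj_eq (addrI dx)) (negPf njy).
rewrite big1 => [|n nxn]; first by rewrite !addr0.
apply: big1 => j _; case: eqP => // e.
case: (ltrgtP dx n) => [ltn|gtn|exn]; last by rewrite exn eqxx in nxn.
  by rewrite topx ?mul0r.
by rewrite topy ?rmorph0 ?mulr0 //; lia.
Qed.

Lemma skew_laurent_domain : is_domain R -> forall a b : S, a * b = 0 -> a = 0 \/ b = 0.
Proof.
move=> [_ hR] a b ab0; case: (eqVneq a 0) => [|a0]; first by left.
case: (eqVneq b 0) => [|b0]; first by right.
have [da [nza topa]] := lcoef_top a0; have [db [nzb topb]] := lcoef_top b0.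
have := lcoefM_top nza nzb topa topb; rewrite ab0 lcoef0 => /esym /hR [ha|].
  by rewrite ha eqxx in nza.
by rewrite -(rmorph0 (sz da)) => /sigz_inj hb; rewrite hb eqxx in nzb.
Qed.

Lemma iota_fixed_central z : (forall r, z * r = r * z) -> sigma z = z ->
  forall y, io z * y = y * io z.
Proof.
move=> zc zfix y; rewrite (lcoef_expand y) /lsum mulr_sumr mulr_suml.
apply: eq_bigr => n _; rewrite mulrA -rmorphM zc -mulrA tpow_iota sigz_fixed //.
by rewrite mulrA -rmorphM.
Qed.

Lemma commute_iota_const x :
  (forall n : int, n != 0 -> forall a : R, a != 0 -> ~ (forall r, r * a = a * sz n r)) ->
  (forall r, x * io r = io r * x) -> x = io (lcoef x 0).
Proof.
move=> hk xc; apply: lcoef_inj => n; rewrite -[io _]mulr1 -[1]/(T 0) lcoef_monomial.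
case: eqP => [-> //|/eqP n0]; case: (eqVneq (lcoef x n) 0) => // a0.
by case: (hk n n0 _ a0) => r; rewrite -lcoef_iotaM -lcoef_Miota xc.
Qed.

Section BellRogalski.
Variables (H J : R -> Prop).
Hypotheses (hH : two_sided_ideal H) (hJ : two_sided_ideal J).
Local Notation Is := (Iseq sigma sigmainv H J).
Local Notation B := (BR sigma sigmainv H J io t tinv).
Local Notation Bn := (BRdeg sigma sigmainv H J io t tinv).

Lemma BR_lcoefP x : B x <-> forall n, Is n (lcoef x n).
Proof.
split=> [[m [c [-> hc]]] n|h].
  rewrite laurent_sumE lcoef_lsum /trunc; case: ifP => [/hc //|_].
  exact: (Iseq_ideal hH hJ n).1.
by exists (lbound x), (lcoef x); rewrite laurent_sumE -lcoef_expand.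
Qed.

Lemma BRdeg_BR n x : Bn n x -> B x.
Proof.
move=> [r [hr ->]]; apply/BR_lcoefP => j; rewrite lcoef_monomial.
by case: eqP => [->|_] //; exact: (Iseq_ideal hH hJ j).1.
Qed.

Lemma BR_iota r : B (io r).
Proof. by apply: (@BRdeg_BR 0); exists r; rewrite mulr1. Qed.

Lemma Iseq1 j : J j -> Is 1 j.
Proof. by move=> hj; apply: ideal_prod1; exists j. Qed.

Lemma IseqN1 h : H h -> Is (Negz 0) (sigmainv h).
Proof. by move=> hh; apply: ideal_prod1; exists h. Qed.

Lemma BR_Jt j : J j -> B (io j * t).
Proof. by move=> hj; apply: (@BRdeg_BR 1); exists j; rewrite /= expr1; split => //; apply: Iseq1. Qed.

Lemma BR_Htinv h : H h -> B (io (sigmainv h) * tinv).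
Proof. by move=> hh; apply: (@BRdeg_BR (Negz 0)); exists (sigmainv h); rewrite /= expr1; split => //; apply: IseqN1. Qed.

Lemma BRdegM m n x y : Bn m x -> Bn n y -> Bn (m + n) (x * y).
Proof.
move=> [a [ha ->]] [b [hb ->]]; exists (a * sz m b); rewrite monomialM.
by split => //; apply: Iseq_mul.
Qed.

Lemma BRD x y : B x -> B y -> B (x + y).
Proof.
move=> /BR_lcoefP hx /BR_lcoefP hy; apply/BR_lcoefP => n; rewrite lcoefD.
exact: (Iseq_ideal hH hJ n).2.1.
Qed.

Lemma BR_sum (I : Type) (s : seq I) (f : I -> S) :
  (forall i, B (f i)) -> B (\sum_(i <- s) f i).
Proof.
move=> hf; apply: (big_ind B) => //; last exact: BRD.
by rewrite -(rmorph0 io); apply: BR_iota.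
Qed.

Lemma BRZ (a : k) x : B x -> B (a *: x).
Proof.
move=> /BR_lcoefP hx; apply/BR_lcoefP => n; rewrite lcoefZ -mulr_algl.
by have [] := (Iseq_ideal hH hJ n).2.2 a%:A _ (hx n).
Qed.

Lemma BR_monomials x : B x -> forall n, Bn n (io (lcoef x n) * T n).
Proof. by move=> /BR_lcoefP hx n; exists (lcoef x n). Qed.

Lemma BRM x y : B x -> B y -> B (x * y).
Proof.
move=> /BR_monomials hx /BR_monomials hy.
rewrite (lcoef_expand x) (lcoef_expand y) /lsum mulr_suml; apply: BR_sum => n.
rewrite mulr_sumr; apply: BR_sum => j; apply: (@BRdeg_BR (n + j)).
exact: BRdegM.
Qed.

Lemma BR_subalg : is_subalg B.
Proof.
split; first by rewrite -(rmorph1 io); apply: BR_iota.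
by split; [exact: BRD | split; [exact: BRM | exact: BRZ]].
Qed.

Lemma BR_homogeneous x : B x -> exists (m : nat) (b : int -> S),
  (forall n, Bn n (b n)) /\ x = \sum_(i < (m.*2).+1) b (i%:Z - m%:Z).
Proof.
move=> /BR_monomials hx; exists (lbound x), (fun n => io (lcoef x n) * T n).
by split => //; rewrite {1}(lcoef_expand x) -laurent_sumE.
Qed.

Lemma BRdeg_sum_eq0 (m : nat) (b : int -> S) : (forall n, Bn n (b n)) ->
  \sum_(i < (m.*2).+1) b (i%:Z - m%:Z) = 0 -> forall n : int, (`|n| <= m)%N -> b n = 0.
Proof.
move=> hb hs.
have bE n : b n = io (lcoef (b n) n) * T n.
  by have [r [_ ->]] := hb n; rewrite lcoef_monomial eqxx.
have /lsum_eq0 hu : lsum m (fun n => lcoef (b n) n) = 0.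
  by rewrite -laurent_sumE -hs; apply: eq_bigr => i _; rewrite -bE.
by move=> n hn; rewrite bE hu // rmorph0 mul0r.
Qed.

Lemma BR_monomial n r : B (io r * T n) -> Bn n (io r * T n).
Proof. by move=> /BR_monomials /(_ n); rewrite lcoef_monomial eqxx. Qed.

Definition BR_generators (g : S) : Prop :=
  (exists r, g = io r) \/ (exists j, J j /\ g = io j * t) \/
  (exists h, H h /\ g = io (sigmainv h) * tinv).

Section Generation.
Variable P : S -> Prop.
Hypotheses (hP : is_subalg P) (hgen : forall g, BR_generators g -> P g).

(* Both [I^(q) t^q] and [I^(-q) t^(-q)] are spanned by products of [q]
   generators of one degree [e = 1] resp. [e = -1]. *)
Lemma subalg_monomial_prod (e : int) (X : R -> Prop) q (w : nat -> R) :
  (forall x, X x -> P (io x * T e)) ->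
  (forall i, (i < q)%N -> exists x, X x /\ w i = sz (e * i%:Z) x) ->
  P (io (\prod_(i < q) w i) * T (e * q%:Z)).
Proof.
case: hP => P1 [_ [PM _]] hX; elim: q => [|q IH] hw.
  by rewrite big_ord0 mulr0 rmorph1 mulr1.
rewrite big_ord_recr /=; have [x [hx ->]] := hw q (ltnSn q).
have -> : e * q.+1%:Z = e * q%:Z + e by rewrite intS mulrDr mulr1 addrC.
rewrite -monomialM; apply: PM (hX x hx).
by apply: IH => i hi; apply: hw; apply: ltnW.
Qed.

Lemma subalg_BRdeg n c : Is n c -> P (io c * T n).
Proof.
have hJt j : J j -> P (io j * T 1) by move=> hj; apply: hgen; right; left; exists j; rewrite /= expr1.
have hHt x : img sigmainv H x -> P (io x * T (Negz 0)).
  by move=> [h [hh ->]]; apply: hgen; right; right; exists h; rewrite /= expr1.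
case: n => [[|p]|p] hc.
- by apply: hgen; left; exists c; rewrite mulr1.
- apply: (ideal_prod_ind (P := fun c => P (io c * T (Posz p.+1)))) hc.
  + by rewrite rmorph0 mul0r; apply: subalg0.
  + by case: hP => _ [PD _] a b ha hb; rewrite rmorphD mulrDl; apply: PD.
  move=> w hw; rewrite -[Posz p.+1]mul1r; apply: subalg_monomial_prod hJt _ => i /hw.
  by rewrite mul1r => -[j [hj ->]]; exists j.
- apply: (ideal_prod_ind (P := fun c => P (io c * T (Negz p)))) hc.
  + by rewrite rmorph0 mul0r; apply: subalg0.
  + by case: hP => _ [PD _] a b ha hb; rewrite rmorphD mulrDl; apply: PD.
  move=> w hw; have -> : Negz p = Negz 0 * p.+1%:Z by rewrite !NegzE mulN1r.
  apply: subalg_monomial_prod hHt _ => i /hw [h [hh ->]].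
  exists (sigmainv h); split; first by exists h.
  by rewrite -[sigmainv h]/(sz (Negz 0) h) -sigzD; congr (sz _ h); rewrite !NegzE; lia.
Qed.

End Generation.

Lemma BR_generated x : B x <-> gen_subalg BR_generators x.
Proof.
split=> [/BR_lcoefP hx P hP hgen|]; last first.
  apply; first exact: BR_subalg.
  by move=> g [[r ->]|[[j [hj ->]]|[h [hh ->]]]]; [apply: BR_iota|apply: BR_Jt|apply: BR_Htinv].
rewrite (lcoef_expand x) /lsum; apply: subalg_sum => // n.
exact: subalg_BRdeg.
Qed.

Lemma BR_domain : is_domain R <-> is_domain_on B.
Proof.
split=> [hR|[_ hB]]; split; rewrite ?oner_neq0 //.
  by move=> a b _ _; apply: skew_laurent_domain.
move=> a b /(congr1 io); rewrite rmorphM rmorph0 => /hB.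
by rewrite -!(rmorph0 io) => /(_ (BR_iota a) (BR_iota b)) [] /iota_inj; [left|right].
Qed.

Lemma BR_center_sub x : is_domain R ->
  (forall n : int, n != 0 -> forall a : R, a != 0 -> ~ (forall r, r * a = a * sz n r)) ->
  (exists j, J j /\ j != 0) ->
  B x -> (forall y, B y -> x * y = y * x) ->
  exists z, (forall r, z * r = r * z) /\ sigma z = z /\ x = io z.
Proof.
move=> [_ hR] hk [j [hj j0]] _ xc; set z := lcoef x 0.
have xz : x = io z by apply: commute_iota_const => // r; apply: xc; apply: BR_iota.
have zc r : z * r = r * z by apply: iota_inj; rewrite !rmorphM; have := xc _ (BR_iota r); rewrite xz.
exists z; split => //; split => //.
(* [z j t = j t z = j sigma(z) t], and [t] is invertible. *)
have := xc _ (BR_Jt hj); rewrite xz mulrA -rmorphM -mulrA t_iota mulrA -rmorphM.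
move=> /(congr1 (fun s => s * tinv)); rewrite -!mulrA t_tinv !mulr1 => /iota_inj.
rewrite zc => /eqP; rewrite -subr_eq0 -mulrBr => /eqP /hR [j0'|].
  by rewrite j0' eqxx in j0.
by move=> /eqP; rewrite subr_eq0 => /eqP.
Qed.

End BellRogalski.
End SkewLaurent.
End Automorphism.

Theorem lemma2p1 (k : fieldType) (R : algType k)
  (sigma : {lrmorphism R -> R}) (sigmainv : R -> R)
  (hsig1 : cancel sigma sigmainv) (hsig2 : cancel sigmainv sigma)
  (H J : R -> Prop) (hH : two_sided_ideal H) (hJ : two_sided_ideal J)
  (hI : forall n : int, exists x, Iseq sigma sigmainv H J n x /\ x != 0)
  (S : algType k) (iota : {lrmorphism R -> S}) (t tinv : S)
  (hS : is_skew_laurent sigma iota t tinv) :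
  let B := BR sigma sigmainv H J iota t tinv in
  let Bn := BRdeg sigma sigmainv H J iota t tinv in
  (* (1) B is a Z-graded subalgebra of S with B_n = I^(n) t^n *)
  (is_subalg B /\
   (forall n x, Bn n x -> B x) /\
   (forall (n : int) (r : R), B (iota r * tpow t tinv n) -> Bn n (iota r * tpow t tinv n)) /\
   (forall m n x y, Bn m x -> Bn n y -> Bn (m + n) (x * y)) /\
   (forall x, B x -> exists (m : nat) (b : int -> S),
       (forall n, Bn n (b n)) /\ x = \sum_(i < (m.*2).+1) b (i%:Z - m%:Z)) /\
   (forall (m : nat) (b : int -> S), (forall n, Bn n (b n)) ->
       \sum_(i < (m.*2).+1) b (i%:Z - m%:Z) = 0 ->
       forall n : int, (`|n| <= m)%N -> b n = 0)) /\
  (* (2) generators R, Jt, sigma^-1(H) t^-1 *)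
  (forall x, B x <->
     gen_subalg (fun g => (exists r, g = iota r) \/
                          (exists j, J j /\ g = iota j * t) \/
                          (exists h, H h /\ g = iota (sigmainv h) * tinv)) x) /\
  (* (3) *)
  (is_domain R <-> is_domain_on B) /\
  (* (4) center *)
  (is_domain R ->
   (forall m : nat, (0 < m)%N -> exists r, iter m sigma r != r) ->
   (forall kk : int, kk != 0 -> forall a : R, a != 0 ->
      ~ (forall r, r * a = a * sigz sigma sigmainv kk r)) ->
   forall x, (B x /\ forall y, B y -> x * y = y * x) <->
     exists z, (forall r, z * r = r * z) /\ sigma z = z /\ x = iota z).
Proof.
move=> B Bn; split; last split; last split.
- split; first exact: BR_subalg.
  split; first by move=> n x; exact: BRdeg_BR.
  split; first by move=> n r; exact: BR_monomial.
  split; first by move=> m n x y; exact: BRdegM.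
  split; first by move=> x; exact: BR_homogeneous.
  by move=> m b; exact: BRdeg_sum_eq0.
- by move=> x; exact: BR_generated.
- exact: BR_domain.
(* The infinite order of [sigma] is not needed (it is the case [a = 1] of the
   last hypothesis), and of [hI] only [I^(1) = J <> 0] is used. *)
move=> hR _ hk x; split=> [[hx xc]|[z [zc [zfix ->]]]].
  apply: (BR_center_sub hsig1 hsig2 hS hH hJ hR hk _ hx xc).
  by have [j [hj j0]] := hI 1; exists j; split => //; exact: (Iseq1_sub hJ hj).
split; first exact: (BR_iota hsig1 hsig2 hS hH hJ).
by move=> y _; apply: (iota_fixed_central hsig1 hsig2 hS).
Qed.
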